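(* Let $p$ be an odd prime, $s$ a nonnegative integer, and $N,n$ positive integers with $\gcd(n,p)=1$. Then $$E_{np^N+s}\equiv E_{np^{N-1}+s}\pmod{p^N},$$ i.e. the difference lies in $p^N\mathbb Z_p$.
   Context: The Euler numbers $E_m$ are defined by $\frac{2}{e^t+1}=\sum_{m\ge0}E_m\frac{t^m}{m!}$. *)

From mathcomp Require Import all_boot all_order all_algebra.
Set Implicit Arguments. Unset Strict Implicit. Unset Printing Implicit Defensive.
Import Order.TTheory GRing.Theory Num.Theory.
Local Open Scope ring_scope.

(* Euler numbers E_m defined by 2/(e^t+1) = sum E_m t^m/m!.
   Multiplying by (e^t + 1) and comparing coefficients of t^m/m! gives
     sum_{k=0}^m C(m,k) E_k + E_m = 2 [m = 0],
   i.e. E_0 = 1 and E_m = -(1/2) sum_{k<m} C(m,k) E_k for m >= 1. *)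
Fixpoint euler_list (m : nat) : seq rat :=
  match m with
  | 0%N => [:: 1]
  | m'.+1 =>
      let l := euler_list m' in
      rcons l (- (1 / 2) * \sum_(k < m'.+1) ('C(m'.+1, k))%:R * nth 0 l k)
  end.

Definition euler (m : nat) : rat := nth 0 (euler_list m) m.

Definition in_pNZp (p N : nat) (x : rat) : Prop :=
  (p ^ N %| `|numq x|)%N /\ ~~ (p %| `|denq x|)%N.

(* For odd M the alternating power sums T_M(m) = sum_{x<M} (-1)^x x^m satisfy
   sum_k C(m,k) T_M(k) + T_M(m) = [m = 0] + M^m, which is the recurrence of the
   Euler numbers up to the term M^m.  Since 1/2 is a p-adic unit, induction on m
   gives E_m = T_M(m) mod M Z_(p); take M = p^N.  The two exponents
   a = n p^N + s and b = n p^(N-1) + s differ by n phi(p^N) and b >= N, so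
   x^a = x^b mod p^N for every x (Euler's theorem when p does not divide x, and
   p^N | x^b otherwise); hence T_M(a) = T_M(b) mod p^N. *)
From mathcomp Require Import all_boot all_order all_algebra.
From mathcomp Require Import cyclic ring lra.
Set Implicit Arguments. Unset Strict Implicit. Unset Printing Implicit Defensive.
Import GRing.Theory Num.Theory.
Local Open Scope ring_scope.

Lemma size_euler_list m : size (euler_list m) = m.+1.
Proof. by elim: m => [|m IH] //=; rewrite size_rcons IH. Qed.

Lemma nth_euler_list m k : (k <= m)%N -> nth 0 (euler_list m) k = euler k.
Proof.
elim: m => [|m IH]; first by rewrite leqn0 => /eqP ->.
rewrite leq_eqVlt => /orP[/eqP -> //|lt_km].
by rewrite /= nth_rcons size_euler_list lt_km IH.
Qed.

Lemma eulerS m :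
  euler m.+1 = - (1 / 2) * \sum_(k < m.+1) ('C(m.+1, k))%:R * euler k.
Proof.
rewrite /euler /= nth_rcons size_euler_list ltnn eqxx.
by congr (_ * _); apply: eq_bigr => k _; rewrite nth_euler_list // -ltnS.
Qed.

Lemma euler_binom_sum m :
  \sum_(k < m.+1) ('C(m, k))%:R * euler k + euler m = 2 * (m == 0%N)%:R.
Proof.
case: m => [|m]; first by rewrite big_ord_recr big_ord0 /euler /= bin0; ring.
by rewrite big_ord_recr /= binn eulerS /=; field.
Qed.

Definition alt_power_sum (M m : nat) : rat := \sum_(x < M) (-1) ^+ x * x%:R ^+ m.

Lemma alt_power_sum_telescope M m :
  \sum_(x < M) (-1) ^+ x * ((x%:R + 1) ^+ m + x%:R ^+ m)
  = 0 ^+ m - (-1) ^+ M * (M%:R : rat) ^+ m.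
Proof.
elim: M => [|M IH]; first by rewrite big_ord0 expr0 mul1r expr0n subrr.
by rewrite big_ord_recr /= IH -addn1 natrD exprD expr1; ring.
Qed.

Lemma alt_power_sum_binom_sum M m : odd M ->
  \sum_(k < m.+1) ('C(m, k))%:R * alt_power_sum M k + alt_power_sum M m
  = (m == 0%N)%:R + M%:R ^+ m.
Proof.
move=> odd_M; rewrite /alt_power_sum.
under eq_bigr do rewrite mulr_sumr.
rewrite exchange_big /= -big_split /=.
transitivity (\sum_(x < M) (-1) ^+ x * ((x%:R + 1) ^+ m + (x%:R : rat) ^+ m)).
  apply: eq_bigr => x _; rewrite exprD1n mulrDr mulr_sumr; congr (_ + _).
  by apply: eq_bigr => k _; rewrite mulr_natl mulrnAr.
by rewrite alt_power_sum_telescope -signr_odd odd_M expr1 expr0n; ring.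
Qed.

(* x lies in p^k Z_(p); the denominator d need not be reduced, so closure
   under sums and products needs no gcd bookkeeping. *)
Definition pval_ge (p k : nat) (x : rat) : Prop :=
  exists (a : rat) (d : nat),
    [/\ a \is a Num.int, ~~ (p %| d)%N & x * d%:R = (p ^ k)%:R * a].

Section PadicValuation.

Variable p : nat.
Hypothesis p_pr : prime p.

Lemma pval_geD k x y : pval_ge p k x -> pval_ge p k y -> pval_ge p k (x + y).
Proof.
move=> [a1 [d1 [a1_int pd1 e1]]] [a2 [d2 [a2_int pd2 e2]]].
exists (a1 * d2%:R + a2 * d1%:R), (d1 * d2)%N; split.
- by rewrite rpredD // rpredM // natr_int.
- by rewrite Euclid_dvdM // negb_or pd1 pd2.
- rewrite natrM; transitivity (x * d1%:R * d2%:R + y * d2%:R * d1%:R); first ring.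
  by rewrite e1 e2; ring.
Qed.

Lemma pval_geMl k r x : pval_ge p 0 r -> pval_ge p k x -> pval_ge p k (r * x).
Proof.
move=> [a1 [d1 [a1_int pd1 e1]]] [a2 [d2 [a2_int pd2 e2]]].
exists (a1 * a2), (d1 * d2)%N; split; first by rewrite rpredM.
- by rewrite Euclid_dvdM // negb_or pd1 pd2.
- rewrite natrM; transitivity ((r * d1%:R) * (x * d2%:R)); first ring.
  by rewrite e1 e2 expn0 mul1r; ring.
Qed.

Lemma pval_ge_int k a : a \is a Num.int -> pval_ge p k ((p ^ k)%:R * a).
Proof.
move=> a_int; exists a, 1%N; split; rewrite ?mulr1 //.
by rewrite dvdn1; case: eqP p_pr => // ->.
Qed.

Lemma pval_ge_zero k : pval_ge p k 0.
Proof. by rewrite -(mulr0 (p ^ k)%:R); apply/pval_ge_int/rpred0. Qed.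

Lemma pval_ge0_int a : a \is a Num.int -> pval_ge p 0 a.
Proof. by move=> /(pval_ge_int 0); rewrite expn0 mul1r. Qed.

Lemma pval_ge_nat k c : (p ^ k %| c)%N -> pval_ge p k c%:R.
Proof. by move=> /divnK <-; rewrite natrM mulrC; apply/pval_ge_int/natr_int. Qed.

Lemma pval_ge0_inv d : ~~ (p %| d)%N -> pval_ge p 0 d%:R^-1.
Proof.
move=> pd; exists 1, d; split; rewrite ?rpred1 // expn0 mul1r mulVf //.
by rewrite pnatr_eq0; apply: contraNneq pd => ->.
Qed.

Lemma pval_geN k x : pval_ge p k x -> pval_ge p k (- x).
Proof. by rewrite -mulN1r; apply/pval_geMl/pval_ge0_int; rewrite rpredN1. Qed.

Lemma pval_geB k x y : pval_ge p k x -> pval_ge p k y -> pval_ge p k (x - y).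
Proof. by move=> px /pval_geN; apply: pval_geD. Qed.

Lemma pval_ge_sum k n (F : 'I_n -> rat) :
  (forall i, pval_ge p k (F i)) -> pval_ge p k (\sum_(i < n) F i).
Proof.
by move=> pF; elim/big_ind: _ => //; [exact: pval_ge_zero | exact: pval_geD].
Qed.

Lemma in_pNZp_pval_ge k y : pval_ge p k y -> in_pNZp p k y.
Proof.
move=> [_ [d [/intrP[z ->] pd e]]].
have e_int : numq y * d = (p ^ k)%:Z * z * denq y.
  apply: (@intr_inj rat); rewrite !intrM numqE.
  have -> : (d%:Z)%:~R = d%:R :> rat by [].
  have -> : ((p ^ k)%N%:Z)%:~R = (p ^ k)%:R :> rat by [].
  by transitivity (y * d%:R * (denq y)%:~R); [ring | rewrite e; ring].
have e_nat : (`|numq y| * d = p ^ k * `|z| * `|denq y|)%N.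
  by have := congr1 absz e_int; rewrite !abszM !absz_nat.
have cop_pk_d : coprime (p ^ k) d by apply: coprimeXl; rewrite prime_coprime.
split; first by rewrite -(Gauss_dvdl _ cop_pk_d) e_nat -mulnA dvdn_mulr.
apply: contra pd => p_den.
have : (`|denq y| %| `|numq y| * d)%N by rewrite e_nat dvdn_mull.
rewrite Gauss_dvdr; first exact: dvdn_trans.
by rewrite coprime_sym coprime_num_den.
Qed.

Lemma alt_power_sum_euler N m : odd p ->
  pval_ge p N (alt_power_sum (p ^ N) m - euler m).
Proof.
move=> odd_p; set M := (p ^ N)%N; pose D k := alt_power_sum M k - euler k.
change (pval_ge p N (D m)).
have odd_M : odd M by rewrite oddX odd_p orbT.
elim/ltn_ind: m => m IH.
have rec_D : \sum_(k < m.+1) ('C(m, k))%:R * D k + D m = M%:R ^+ m - (m == 0%N)%:R.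
  rewrite /D; under eq_bigr do rewrite mulrBr.
  by rewrite sumrB; move: (alt_power_sum_binom_sum m odd_M) (euler_binom_sum m); lra.
rewrite big_ord_recr /= binn mul1r in rec_D.
have -> : D m = 2%:R^-1 * (M%:R ^+ m - (m == 0%N)%:R
    - \sum_(i < m) ('C(m, i))%:R * D i).
  by rewrite -rec_D; field.
apply: pval_geMl; first by apply: pval_ge0_inv; rewrite -prime_coprime // coprimen2.
apply: pval_geB.
  case: m {IH rec_D} => [|m]; first by rewrite subrr; apply: pval_ge_zero.
  by rewrite subr0 -natrX; apply: pval_ge_nat; rewrite expnS dvdn_mulr.
apply: pval_ge_sum => i; apply: pval_geMl; first exact/pval_ge0_int/natr_int.
exact: IH.
Qed.

End PadicValuation.

Lemma dvdn_subX_totient p N b k x : prime p -> (N <= b)%N ->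
  (p ^ N %| x ^ (b + k * totient (p ^ N)) - x ^ b)%N.
Proof.
move=> p_pr le_Nb; have [p_x | p'x] := boolP (p %| x)%N.
  have pN_xb : (p ^ N %| x ^ b)%N := dvdn_trans (dvdn_exp2l p le_Nb) (dvdn_exp2r b p_x).
  by apply: dvdn_sub => //; rewrite expnD dvdn_mulr.
have cop : coprime x (p ^ N) by apply: coprimeXr; rewrite coprime_sym prime_coprime.
rewrite expnD -{2}(muln1 (x ^ b)%N) -mulnBr dvdn_mull // mulnC expnM.
have x_gt0 : (0 < x)%N by case: x p'x {cop} => //; rewrite dvdn0.
rewrite -eqn_mod_dvd ?expn_gt0 ?x_gt0 //.
by rewrite -modnXm (Euler_exp_totient cop) modnXm exp1n.
Qed.

Lemma euler_exponent_split p N n s : prime p -> (0 < N)%N ->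
  (n * p ^ N + s = (n * p ^ N.-1 + s) + n * totient (p ^ N))%N.
Proof.
move=> p_pr N_gt0; rewrite totient_pfactor // -{1}(prednK N_gt0) expnS.
by rewrite -{1}(prednK (prime_gt0 p_pr)) /=; ring.
Qed.

Theorem corollary5p2 (p s N n : nat) :
  prime p -> odd p -> (0 < N)%N -> (0 < n)%N -> coprime n p ->
  in_pNZp p N (euler (n * p ^ N + s) - euler (n * p ^ N.-1 + s)).
Proof.
move=> p_pr odd_p N_gt0 n_gt0 _; apply: (in_pNZp_pval_ge p_pr).
set a := (n * p ^ N + s)%N; set b := (n * p ^ N.-1 + s)%N; set M := (p ^ N)%N.
have le_Nb : (N <= b)%N.
  rewrite (leq_trans _ (leq_addr _ _)) // (leq_trans _ (leq_pmull _ n_gt0)) //.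
  by rewrite -{1}(prednK N_gt0) ltn_expl ?prime_gt1.
have le_ba x : (x ^ b <= x ^ a)%N.
  case: x => [|x]; last by rewrite leq_pexp2l // /a euler_exponent_split ?leq_addr.
  by rewrite exp0n // (leq_trans N_gt0).
have -> : euler a - euler b = (alt_power_sum M a - alt_power_sum M b)
   - (alt_power_sum M a - euler a) + (alt_power_sum M b - euler b) by ring.
apply: (pval_geD p_pr); last exact: (alt_power_sum_euler p_pr _ _ odd_p).
apply: (pval_geB p_pr); last exact: (alt_power_sum_euler p_pr _ _ odd_p).
rewrite -sumrB; apply: (pval_ge_sum p_pr) => x; rewrite -mulrBr.
apply: (pval_geMl p_pr); first by apply: (pval_ge0_int p_pr); rewrite rpredX // rpredN1.
rewrite -!natrX -natrB //; apply: (pval_ge_nat p_pr).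
rewrite /a euler_exponent_split //.
exact: dvdn_subX_totient.
Qed.
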